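(* Let $\mathcal{G}$ be a locally compact étale groupoid acting (on the left) on a topological space $Y$ with anchor map $r_Y\colon Y\to\mathcal{G}^0$, and let $\mathcal{U}\subseteq\mathcal{G}$ be a slice. Let $\vartheta_Y(\mathcal{U})\colon r_Y^{-1}(s(\mathcal{U}))\to r_Y^{-1}(r(\mathcal{U}))$ be the partial homeomorphism $y\mapsto\gamma\cdot y$, where $\gamma\in\mathcal{U}$ is the unique element with $s(\gamma)=r_Y(y)$. Then $\vartheta_Y(\mathcal{U})$ extends uniquely to a partial homeomorphism \[\vartheta_{\beta_{\mathcal{G}^0}Y}(\mathcal{U})\colon(\beta_{\mathcal{G}^0}r_Y)^{-1}(s(\mathcal{U}))\xrightarrow{\sim}(\beta_{\mathcal{G}^0}r_Y)^{-1}(r(\mathcal{U}))\] of $\beta_{\mathcal{G}^0}Y$, where ''extends'' means $\vartheta_{\beta_{\mathcal{G}^0}Y}(\mathcal{U})\circ i_Y=i_Y\circ\vartheta_Y(\mathcal{U})$ for the canonical map $i_Y\colon Y\to\beta_{\mathcal{G}^0}Y$.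
   Context: $\mathcal{G}$ is an étale topological groupoid (range and source maps $r,s$ local homeomorphisms) whose object space $\mathcal{G}^0$ is Hausdorff and locally compact. A slice is an open subset $\mathcal{U}\subseteq\mathcal{G}$ on which $s$ and $r$ are injective (hence homeomorphisms onto open subsets of $\mathcal{G}^0$). A partial homeomorphism of a space is a homeomorphism between two open subsets. For a locally compact Hausdorff $B$ and a space $X$ with continuous $r\colon X\to B$, let $H_X\subseteq\mathrm{C_b}(X)$ be the closed linear span of the products $f\cdot(h\circ r)$, $f\in\mathrm{C_b}(X)$, $h\in\mathrm C_0(B)$; the relative Stone--Čech compactification $\beta_BX$ is the spectrum of the commutative C*-algebra $H_X$, $i\colon X\to\beta_BX$ sends $x$ to evaluation at $x$, and $\beta_Br\colon\beta_BX\to B$ is the unique continuous map with $\beta_Br\circ i=r$. Here $B=\mathcal{G}^0$ and $r=r_Y$. *)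

From HB Require Import structures.
From mathcomp Require Import all_boot all_order all_algebra.
From mathcomp Require Import all_classical all_reals all_analysis.

Set Implicit Arguments.
Unset Strict Implicit.
Unset Printing Implicit Defensive.

Import Order.TTheory GRing.Theory Num.Theory.
Import numFieldTopology.Exports numFieldNormedType.Exports.
Local Open Scope classical_set_scope.
Local Open Scope ring_scope.

Definition local_homeomorphism (T U : topologicalType) (f : T -> U) : Prop :=
  continuous f /\
  forall x : T, exists V : set T,
    [/\ open V, V x,
        (forall a b, V a -> V b -> f a = f b -> a = b) &
        (forall W : set T, open W -> W `<=` V -> open (f @` W))].

Definition partial_homeo (T : topologicalType) (D E : set T) (f : T -> T) : Prop :=
  [/\ f @` D = E,
      (forall a b, D a -> D b -> f a = f b -> a = b),
      {within D, continuous f} &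
      exists g : T -> T,
        [/\ g @` E = D, (forall a, D a -> g (f a) = a),
            (forall b, E b -> f (g b) = b) & {within E, continuous g}]].

(** Arrows [G], objects [O], source [s], range [r], units [u],
    multiplication [mul g h] (meaningful when [s g = r h]), inverse [inv]. *)
Definition is_groupoid (G O : Type) (s r : G -> O) (u : O -> G)
    (mul : G -> G -> G) (inv : G -> G) : Prop :=
  [/\ (forall x, s (u x) = x /\ r (u x) = x),
      (forall g h, s g = r h -> s (mul g h) = s h /\ r (mul g h) = r g),
      (forall g h k, s g = r h -> s h = r k ->
          mul (mul g h) k = mul g (mul h k)),
      (forall g, mul (u (r g)) g = g /\ mul g (u (s g)) = g) &
      (forall g, [/\ s (inv g) = r g, r (inv g) = s g,
                     mul (inv g) g = u (s g) & mul g (inv g) = u (r g)])].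

Definition is_lc_etale_groupoid (G O : topologicalType) (s r : G -> O)
    (u : O -> G) (mul : G -> G -> G) (inv : G -> G) : Prop :=
  [/\ is_groupoid s r u mul inv,
      continuous u /\ continuous inv,
      {within [set p : G * G | s p.1 = r p.2], continuous (fun p => mul p.1 p.2)},
      local_homeomorphism s /\ local_homeomorphism r &
      [/\ hausdorff_space O, locally_compact [set: O] & locally_compact [set: G]]].

(** Continuous left action of the groupoid on [Y] with anchor map [rY];
    [act g y] is meaningful when [s g = rY y]. *)
Definition is_groupoid_action (G O Y : topologicalType) (s r : G -> O)
    (u : O -> G) (mul : G -> G -> G) (rY : Y -> O) (act : G -> Y -> Y) : Prop :=
  [/\ continuous rY,
      (forall g y, s g = rY y -> rY (act g y) = r g),
      (forall y, act (u (rY y)) y = y),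
      (forall g h y, s g = r h -> s h = rY y -> act (mul g h) y = act g (act h y)) &
      {within [set p : G * Y | s p.1 = rY p.2], continuous (fun p => act p.1 p.2)}].

Definition is_slice (G O : topologicalType) (s r : G -> O) (U : set G) : Prop :=
  [/\ open U,
      (forall a b, U a -> U b -> s a = s b -> a = b) &
      (forall a b, U a -> U b -> r a = r b -> a = b)].

Section RelStoneCech.
Variables (R : realType) (X B : topologicalType) (rX : X -> B).

Definition Cb (f : X -> R) : Prop :=
  continuous f /\ exists M : R, forall x, `|f x| <= M.

Definition C0 (h : B -> R) : Prop :=
  continuous h /\
  forall e : R, 0 < e -> exists K : set B, compact K /\
     forall b, ~ K b -> `|h b| < e.

(** [H_X]: the sup-norm closure of the linear span of the products
    [f * (h \o rX)], [f] in [Cb], [h] in [C0]. *)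
Definition inH (F : X -> R) : Prop :=
  Cb F /\
  forall e : R, 0 < e -> exists (n : nat) (fs : 'I_n -> X -> R) (hs : 'I_n -> B -> R),
    (forall i, Cb (fs i) /\ C0 (hs i)) /\
    forall x, `|F x - \sum_(i < n) fs i x * hs i (rX x)| <= e.

Local Notation functionals := {ptws (X -> R) -> R}.

(** Characters of [H_X] (nonzero multiplicative linear functionals),
    normalised to vanish outside [H_X]. *)
Definition is_character (phi : functionals) : Prop :=
  [/\ (forall F, ~ inH F -> phi F = 0),
      (forall F G, inH F -> inH G -> phi (fun x => F x + G x) = phi F + phi G),
      (forall (a : R) F, inH F -> phi (fun x => a * F x) = a * phi F),
      (forall F G, inH F -> inH G -> phi (fun x => F x * G x) = phi F * phi G) &
      exists2 F, inH F & phi F <> 0].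

(** [beta_B X]: the spectrum of [H_X], as a subspace of [functionals]. *)
Definition betaX : set functionals := [set phi | is_character phi].

Definition iota_beta (x : X) : functionals :=
  fun F => if `[< inH F >] then F x else 0.

End RelStoneCech.

Notation functionals R X := {ptws (X -> R%type) -> R%type}.

Arguments Cb R {X} f.
Arguments C0 R {B} h.
Arguments inH R {X B} rX F.
Arguments is_character R {X B} rX phi.
Arguments betaX R {X B} rX _.
Arguments iota_beta R {X B} rX x _.

(* A point [phi] of the relative Stone-Cech compactification is a character of
   [H_Y].  Characters are [C_0(O)]-linear, [phi (G * (h \o r_Y)) = phi G * h (beta r phi)],
   because both sides are continuous in [phi] and agree on the dense image of [Y]; the
   density holds since a character [phi] not approximated by points of [Y] on [F_1..F_n]
   makes [sum_i (F_i - phi F_i)^2] bounded below, hence invertible in [C_b(Y)], while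
   [phi] kills it.
   For [phi] over [s(U)] and a bump function [k] supported in [s(U)] with
   [k (beta r phi) <> 0], the extension is
     [theta phi F = phi ((k \o r_Y)^2 * (F \o theta_Y)) / k (beta r phi)^2],
   independent of [k] by [C_0(O)]-linearity.  It is again a character, continuous,
   covers [r \o s^-1] on [O], and extends [theta_Y]; the same construction for the
   inverse slice is its inverse, and uniqueness is once more density of [Y]. *)

From HB Require Import structures.
From mathcomp Require Import all_boot all_order all_algebra.
From mathcomp Require Import all_classical all_reals all_analysis.
From mathcomp Require Import ring lra.
Local Open Scope classical_set_scope.
Local Open Scope ring_scope.
Import numFieldTopology.Exports numFieldNormedType.Exports.
Import Order.TTheory GRing.Theory Num.Theory.
Set Implicit Arguments.
Unset Strict Implicit.
Unset Printing Implicit Defensive.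

Lemma cvg_near_eq (T U : topologicalType) (F : set_system T) {FF : Filter F}
    (f g : T -> U) (l : U) :
  {near F, f =1 g} -> g @ F --> l -> f @ F --> l.
Proof. by move=> fg; apply: cvg_trans; apply: near_eq_cvg; apply: filterS fg => x ->. Qed.

Lemma continuous_cvg_within (T U : topologicalType) (A : set T) (f : T -> U) x :
  {for x, continuous f} -> f @ within A (nbhs x) --> f x.
Proof. by move=> cf; apply: cvg_trans cf; apply: cvg_app; exact: cvg_within. Qed.

Lemma continuous_zero_off (T : topologicalType) (R : realType) (f : T -> R) (A C : set T) :
  open A -> closed C -> C `<=` A -> (forall x, A x -> {for x, continuous f}) ->
  (forall x, ~ C x -> f x = 0) -> continuous f.
Proof.
move=> oA clC CA cA f0 x; case: (pselect (A x)) => Ax; first exact: cA.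
rewrite /continuous_at f0; last by move=> /CA.
apply: (@cvg_near_eq _ _ _ _ f (fun _ => 0)); last exact: cvg_cst.
have : nbhs x (~` C) by apply: open_nbhs_nbhs; split; [exact: closed_openC|move=> /CA].
by apply: filterS => z /f0.
Qed.

Lemma continuous_within_comp (T U V : topologicalType) (D : set T) (E : set U)
    (f : T -> U) (g : U -> V) :
  {within D, continuous f} -> (forall x, D x -> E (f x)) -> {within E, continuous g} ->
  {within D, continuous (g \o f)}.
Proof.
move=> /subspace_continuousP cf DE /subspace_continuousP cg.
apply/subspace_continuousP => x Dx; apply: cvg_comp (cg _ (DE _ Dx)) => P /= /(cf _ Dx).
by rewrite !nbhs_simpl /within /=; apply: filterS => q fP Dq; exact: fP Dq (DE _ Dq).
Qed.

Lemma continuous_comp_within (T U V : topologicalType) (S : set U) (h : T -> U)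
    (k : U -> V) (y : T) :
  {for y, continuous h} -> (\forall z \near y, S (h z)) -> S (h y) ->
  {within S, continuous k} -> {for y, continuous (k \o h)}.
Proof.
move=> ch nS Sy /subspace_continuousP /(_ _ Sy) ck.
apply: (cvg_comp _ _ _ ck) => P /= /ch; apply: filterS2 nS => z Sz Pz; exact: Pz Sz.
Qed.

Section BoundedContinuous.
Variables (R : realType) (Y : topologicalType).

Lemma Cb_cst (c : R) : Cb R (fun _ : Y => c).
Proof. split; first exact: cst_continuous. by exists `|c|. Qed.

Lemma CbD (f g : Y -> R) : Cb R f -> Cb R g -> Cb R (fun y => f y + g y).
Proof.
move=> [cf [M fM]] [cg [N gN]]; split; first by move=> y; apply: cvgD; [exact: cf|exact: cg].
by exists (M + N) => y; apply: (le_trans (ler_normD _ _)); exact: lerD.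
Qed.

Lemma CbM (f g : Y -> R) : Cb R f -> Cb R g -> Cb R (fun y => f y * g y).
Proof.
move=> [cf [M fM]] [cg [N gN]]; split; first by move=> y; apply: cvgM; [exact: cf|exact: cg].
by exists (M * N) => y; rewrite normrM; apply: ler_pM.
Qed.

Lemma Cb_sqrrB (f : Y -> R) (c : R) : Cb R f -> Cb R (fun y => (f y - c) ^+ 2).
Proof. by move=> Cf; have Cfc := CbD Cf (Cb_cst (- c)); exact: CbM. Qed.

Lemma Cb_comp_unit {O : topologicalType} (g : Y -> O) (h : O -> R) :
  continuous g -> continuous h -> (forall z, 0 <= h z <= 1) -> Cb R (h \o g).
Proof.
move=> cg ch h01; split; first by move=> y; apply: continuous_comp; [exact: cg|exact: ch].
by exists 1 => y; have /andP[h0 h1] := h01 (g y); rewrite /= ger0_norm.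
Qed.

End BoundedContinuous.

Section Bumps.
Variables (R : realType) (O : topologicalType).

Definition compact_support_in (A : set O) (k : O -> R) :=
  exists K, [/\ compact K, K `<=` A & forall z, ~ K z -> k z = 0].

Definition bump_in (A : set O) (k : O -> R) :=
  [/\ continuous k, forall z, 0 <= k z <= 1 & compact_support_in A k].

Lemma bump_C0 (A : set O) (k : O -> R) : bump_in A k -> C0 R k.
Proof.
move=> [ck _ [K [cK _ Kz]]]; split => // e e0; exists K; split => // z nK.
by rewrite Kz // normr0.
Qed.

Lemma bump_eq0 (A : set O) (k : O -> R) z : bump_in A k -> ~ A z -> k z = 0.
Proof. by move=> [_ _ [K [_ KA Kz]]] nAz; apply: Kz => /KA. Qed.

Lemma bump_sqr (A : set O) (k : O -> R) : bump_in A k -> bump_in A (fun z => k z ^+ 2).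
Proof.
move=> [ck k01 [K [cK KA Kz]]]; split.
- by move=> z; apply: cvgM; exact: ck.
- by move=> z; have /andP[k0 k1] := k01 z; rewrite sqr_ge0 expr_le1.
- by exists K; split => // z /Kz ->; rewrite expr0n.
Qed.

Hypothesis hO : hausdorff_space O.

Lemma bump_mul_comp (A : set O) (k h : O -> R) (tau : O -> O) :
  open A -> bump_in A k ->
  (forall x, A x -> {for x, continuous tau}) -> continuous h -> (forall z, 0 <= h z <= 1) ->
  bump_in A (fun z => if `[< A z >] then k z * h (tau z) else 0).
Proof.
move=> oA [ck k01 [K [cK KA Kz]]] ctau ch h01; split; last first.
- by exists K; split => // z /Kz ->; case: asboolP; rewrite ?mul0r.
- move=> z; case: asboolP => _; last by rewrite lexx ler01.
  have /andP[? ?] := k01 z; have /andP[? ?] := h01 (tau z).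
  by rewrite mulr_ge0 //= mulr_ile1.
apply: (continuous_zero_off oA (compact_closed hO cK) KA); last first.
  by move=> z /Kz ->; case: asboolP; rewrite ?mul0r.
move=> x Ax; apply: (@cvg_near_eq _ _ _ _ _ (fun z => k z * h (tau z))).
  by apply: filterS (open_nbhs_nbhs (conj oA Ax)) => z Az; rewrite asboolT.
rewrite /= asboolT //; apply: cvgM; first exact: ck.
by apply: continuous_comp; [exact: ctau|exact: ch].
Qed.

Hypothesis lcO : locally_compact [set: O].

Lemma exists_bump (A : set O) (x : O) : open A -> A x ->
  exists2 k : O -> R, bump_in A k & k x != 0.
Proof.
move=> oA Ax.
have [//|C Cx [cptC clC]] := lcO (x := x); rewrite withinET in Cx.
have : nbhs x (C `&` A) by apply: filterI => //; exact: open_nbhs_nbhs.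
rewrite nbhsE => -[W [oW Wx] WCA].
have := @locally_compact_completely_regular O R lcO hO x (~` W) (open_closedC oW).
move=> /(_ (fun nWx => nWx Wx)) /(@uniform_separatorP _ R) [f [cf f01 fx0 fZ1]].
have fx : f x = 0 by apply: fx0; exists x.
have fZ z : ~ W z -> f z = 1 by move=> Wz; apply: fZ1; exists z.
have f01' z : 0 <= f z <= 1.
  by have := f01 (f z) (ex_intro2 _ _ z I erefl); rewrite /= in_itv.
(* the bump is [max(0, 1/2 - f)], supported where [f <= 1/2] *)
exists ((fun _ => 0) \max (fun z => 2^-1 - f z)); last first.
  by rewrite /= fx subr0 gt_eqF // lt_max invr_gt0 ltr0n orbT.
split.
- move=> z; apply: continuous_max; first exact: cst_continuous.
  by apply: cvgB; [exact: cvg_cst|exact: cf].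
- by move=> z /=; rewrite le_max lexx /= ge_max ler01 /=; have /andP[] := f01' z; lra.
exists (C `&` [set z | f z <= 2^-1]); split.
- apply: compact_closedI => //.
  by apply: (@preimage_closed _ _ _ [set r : R | r <= 2^-1]) => //; exact: closed_le.
- move=> z [Cz /= fz]; apply: (fun h => proj2 (WCA z h)).
  by apply: contrapT => nW; have := fZ z nW; lra.
- move=> z nK /=; apply/eqP; rewrite eq_le le_max lexx /= ge_max lexx /= andbT subr_le0.
  case: (pselect (C z)) => Cz.
    by rewrite leNgt; apply/negP => fz; apply: nK; split => //=; exact: ltW.
  by rewrite fZ; [lra|move=> /WCA[]].
Qed.

End Bumps.

Section RelativeAlgebra.
Variables (R : realType) (Y O : topologicalType) (rY : Y -> O).
Hypothesis crY : continuous rY.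
Local Notation H := (inH R rY).

Lemma inH_Cb (F : Y -> R) : H F -> Cb R F.
Proof. by case. Qed.

Lemma inH_mul_bump (A : set O) (f : Y -> R) (k : O -> R) :
  Cb R f -> bump_in A k -> H (fun y => f y * k (rY y)).
Proof.
move=> Cf bk; have [ck k01 _] := bk; split; first exact: CbM (Cb_comp_unit crY ck k01).
move=> e e0; exists 1%N, (fun _ => f), (fun _ => k); split => [_|y].
  by split => //; exact: bump_C0 bk.
by rewrite big_ord1 subrr normr0 ltW.
Qed.

Lemma inH_mulCbl (f F : Y -> R) : Cb R f -> H F -> H (fun y => f y * F y).
Proof.
move=> Cf [CF aF]; split; first exact: CbM.
have [_ [M fM]] := Cf; move=> e e0.
have M1 : 0 < `|M| + 1 by rewrite ltr_wpDl.
have [n [fs [hs [Hi Happ]]]] := aF (e / (`|M| + 1)) (divr_gt0 e0 M1).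
exists n, (fun i y => f y * fs i y), hs; split.
  by move=> i; have [? ?] := Hi i; split => //; exact: CbM.
move=> y.
have -> : f y * F y - \sum_(i < n) f y * fs i y * hs i (rY y)
   = f y * (F y - \sum_(i < n) fs i y * hs i (rY y)).
  by rewrite mulrBr mulr_sumr; congr (_ - _); apply: eq_bigr => i _; rewrite mulrA.
rewrite normrM -[e](@divfK _ (`|M| + 1)) ?gt_eqF // mulrC.
apply: ler_pM => //; apply: (le_trans (fM y)).
by rewrite (le_trans (ler_norm M)) // lerDl.
Qed.

Lemma inHM (F G : Y -> R) : H F -> H G -> H (fun y => F y * G y).
Proof. by move=> /inH_Cb; exact: inH_mulCbl. Qed.

Lemma inHZ (a : R) (F : Y -> R) : H F -> H (fun y => a * F y).
Proof. exact/inH_mulCbl/Cb_cst. Qed.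

Lemma inH0 : H (fun _ => 0).
Proof.
split; first exact: Cb_cst.
move=> e e0; exists 0%N, (fun _ _ => 0), (fun _ _ => 0); split => [[]//|y].
by rewrite big_ord0 subr0 normr0 ltW.
Qed.

Lemma inHD (F G : Y -> R) : H F -> H G -> H (fun y => F y + G y).
Proof.
move=> [CF aF] [CG aG]; split; first exact: CbD.
move=> e e0; have e20 : 0 < e / 2 by rewrite divr_gt0.
have [n [fs [hs [Hi Happ]]]] := aF _ e20.
have [m [gs [ks [Ki Kapp]]]] := aG _ e20.
exists (n + m)%N,
  (fun i => match fintype.split i with inl j => fs j | inr j => gs j end),
  (fun i => match fintype.split i with inl j => hs j | inr j => ks j end); split.
  by move=> i; case: (fintype.split i).
move=> y; rewrite big_split_ord /=.
under eq_bigr => i _ do rewrite (unsplitK (inl i)).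
under [X in _ - (_ + X)]eq_bigr => i _ do rewrite (unsplitK (inr i)).
rewrite opprD addrACA (splitr e); apply: (le_trans (ler_normD _ _)).
exact: lerD.
Qed.

End RelativeAlgebra.

Section Characters.
Variables (R : realType) (Y O : topologicalType) (rY : Y -> O).
Local Notation H := (inH R rY).
Local Notation iota := (iota_beta R rY).
Variable p : functionals R Y.
Hypothesis Hp : is_character R rY p.

Lemma characterN F : ~ H F -> p F = 0.
Proof. by case: Hp => pN _ _ _ _; exact: pN. Qed.

Lemma characterD K F G : H F -> H G -> K =1 (fun y => F y + G y) -> p K = p F + p G.
Proof. by case: Hp => _ pD _ _ _ HF HG /funext ->; exact: pD. Qed.

Lemma characterZ K a F : H F -> K =1 (fun y => a * F y) -> p K = a * p F.
Proof. by case: Hp => _ _ pZ _ _ HF /funext ->; exact: pZ. Qed.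

Lemma characterM K F G : H F -> H G -> K =1 (fun y => F y * G y) -> p K = p F * p G.
Proof. by case: Hp => _ _ _ pM _ HF HG /funext ->; exact: pM. Qed.

Lemma character0 K : K =1 (fun _ => 0) -> p K = 0.
Proof.
move=> K0; have [_ _ _ _ [F HF _]] := Hp.
by rewrite (@characterZ K 0 F) ?mul0r // => y; rewrite K0 mul0r.
Qed.

Lemma character_sqrrB_mul G F c : H G -> H F ->
  p (fun y => (F y - c) ^+ 2 * G y) = (p F - c) ^+ 2 * p G.
Proof.
move=> HG HF.
have HFG := inHM HF HG.
have HcFG : H (fun y => - (2 * c) * (F y * G y)) by exact: inHZ.
have HcG : H (fun y => c ^+ 2 * G y) by exact: inHZ.
rewrite (@characterD _ _ _ (inHM HF HFG) (inHD HcFG HcG)); last by move=> y; ring.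
rewrite (characterM HF HFG (fun _ => erefl)) (characterD HcFG HcG (fun _ => erefl)).
rewrite (characterZ HFG (fun _ => erefl)) (characterZ HG (fun _ => erefl)).
rewrite (characterM HF HG (fun _ => erefl)).
by ring.
Qed.

Definition inH_part (F : Y -> R) : Y -> R := if `[< H F >] then F else fun _ => 0.

Lemma inH_partE F : H F -> inH_part F = F.
Proof. by rewrite /inH_part => /asboolT ->. Qed.

Lemma inH_inH_part F : H (inH_part F).
Proof. by rewrite /inH_part; case: asboolP => // _; exact: inH0. Qed.

Definition defect (l : seq (Y -> R)) (y : Y) : R :=
  \sum_(F <- l) (inH_part F y - p (inH_part F)) ^+ 2.

Lemma defect_cons F l y :
  defect (F :: l) y = (inH_part F y - p (inH_part F)) ^+ 2 + defect l y.
Proof. exact: big_cons. Qed.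

Lemma defect_Cb l : Cb R (defect l).
Proof.
elim: l => [|F l IH].
  by rewrite (_ : defect [::] = fun _ => 0); [exact: Cb_cst|apply/funext => y; exact: big_nil].
have -> : defect (F :: l) = fun y => (inH_part F y - p (inH_part F)) ^+ 2 + defect l y.
  by apply/funext => y; exact: defect_cons.
exact: CbD (Cb_sqrrB _ (inH_Cb (inH_inH_part F))) IH.
Qed.

Lemma defect_ge0 l y : 0 <= defect l y.
Proof. by apply: sumr_ge0 => F _; exact: sqr_ge0. Qed.

Lemma defect_ge l F y : List.In F l -> (inH_part F y - p (inH_part F)) ^+ 2 <= defect l y.
Proof.
elim: l => [//|G l IH] /= [<-|lF]; rewrite defect_cons.
  by rewrite lerDl defect_ge0.
by rewrite (le_trans (IH lF)) // lerDr sqr_ge0.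
Qed.

(* [p] kills [defect l * G] since it kills each [(F - p F)^2 * G] *)
Lemma character_defect_mul l G : H G -> p (fun y => defect l y * G y) = 0.
Proof.
move=> HG; elim: l => [|F l IH].
  by apply: character0 => y; rewrite /defect big_nil mul0r.
have HF := inH_inH_part F.
have HT := inH_mulCbl (Cb_sqrrB (p (inH_part F)) (inH_Cb HF)) HG.
rewrite (characterD HT (inH_mulCbl (defect_Cb l) HG)); last first.
  by move=> y; rewrite defect_cons mulrDl.
by rewrite IH character_sqrrB_mul // subrr expr0n mul0r addr0.
Qed.

Lemma defect_small l c : 0 < c -> exists y, defect l y < c.
Proof.
move=> c0; apply: contrapT => /forallNP defect_big.
have Kc y : c <= defect l y by rewrite leNgt; apply/negP; exact: defect_big.
have [_ _ _ _ [F HF pF]] := Hp.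
have CbV : Cb R (fun y => (defect l y)^-1).
  have [cK _] := defect_Cb l; split.
    by move=> y; apply: cvgV; [rewrite gt_eqF // (lt_le_trans c0)|exact: cK].
  exists c^-1 => y; rewrite ger0_norm ?invr_ge0 ?defect_ge0 //.
  by rewrite lef_pV2 ?posrE // (lt_le_trans c0).
apply: pF; rewrite -(character_defect_mul l (inH_mulCbl CbV HF)); congr p.
by apply/funext => y; rewrite mulrA mulfV ?mul1r // gt_eqF // (lt_le_trans c0).
Qed.

Lemma iota_approx l e : 0 < e ->
  exists y, forall F, List.In F l -> `|iota y F - p F| < e.
Proof.
move=> e0; have [y Ky] := defect_small l (exprn_gt0 2 e0).
exists y => F lF; rewrite /iota_beta; case: asboolP => [HF|nHF].
  rewrite -ltr_sqr ?nnegrE ?normr_ge0 ?(ltW e0) //= (real_normK (num_real _)).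
  by apply: le_lt_trans Ky; have := defect_ge y lF; rewrite inH_partE.
by rewrite characterN // subrr normr0.
Qed.

End Characters.

Section PointwiseTopology.
Import ArrowAsProduct.
Variables (R : realType) (Y : topologicalType).
Local Notation FN := (functionals R Y).

Lemma ptws_eval_continuous (F : Y -> R) : continuous (fun q : FN => q F).
Proof.
move=> q; have : nbhs q --> q by [].
by move/(@pointwise_cvgP (Y -> R) R (nbhs q) q (nbhs_filter q)); apply.
Qed.

Lemma cvg_functionals (Fl : set_system FN) (p : FN) : Filter Fl ->
  (forall F, (fun q : FN => q F) @ Fl --> p F) -> Fl --> p.
Proof. by move=> FF Fp; apply/(@pointwise_cvgP (Y -> R) R Fl p FF). Qed.

Definition ptws_basic (p : FN) (N : set FN) := exists l (e : R), 0 < e /\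
  forall q : FN, (forall F, List.In F l -> `|q F - p F| < e) -> N q.

Lemma ptws_basic_filter p : Filter (ptws_basic p).
Proof.
constructor; first by exists [::], 1.
  move=> P Q [l1 [e1 [e10 lP]]] [l2 [e2 [e20 lQ]]].
  exists (l1 ++ l2), (Num.min e1 e2); split; first by rewrite lt_min e10.
  move=> q lq; split; [apply: lP|apply: lQ] => F lF.
    by apply: (lt_le_trans (lq F _)); [apply: List.in_or_app; left|rewrite ge_min lexx].
  by apply: (lt_le_trans (lq F _)); [apply: List.in_or_app; right|rewrite ge_min lexx orbT].
by move=> P Q PQ [l [e [e0 lP]]]; exists l, e; split => // q /lP; exact: PQ.
Qed.

Lemma nbhs_ptws_basic (p : FN) (N : set FN) : nbhs p N -> ptws_basic p N.
Proof.
move: N; apply: (cvg_functionals (ptws_basic_filter p)) => F A /nbhs_ballP [e e0 eA].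
exists [:: F], e; split => // q lq; apply: eA.
by rewrite -ball_normE /= distrC; apply: lq; left.
Qed.

End PointwiseTopology.

Section Density.
Variables (R : realType) (Y O : topologicalType) (rY : Y -> O).
Hypothesis crY : continuous rY.
Local Notation H := (inH R rY).
Local Notation iota := (iota_beta R rY).
Local Notation FN := (functionals R Y).
Local Notation bX := (betaX R rY).

Lemma iota_betaE y F : H F -> iota y F = F y.
Proof. by rewrite /iota_beta => /asboolT ->. Qed.

Lemma iota_betaN y F : ~ H F -> iota y F = 0.
Proof. by rewrite /iota_beta => /asboolF ->. Qed.

Lemma iota_character y F : H F -> F y != 0 -> is_character R rY (iota y).
Proof.
move=> HF Fy; split => [G /iota_betaN //|G G' HG HG'|a G HG|G G' HG HG'|].
- by rewrite !iota_betaE //; exact: inHD.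
- by rewrite !iota_betaE //; exact: inHZ.
- by rewrite !iota_betaE //; exact: inHM.
- by exists F => //; rewrite iota_betaE //; exact/eqP.
Qed.

Lemma iota_betaX : hausdorff_space O -> locally_compact [set: O] -> forall y, bX (iota y).
Proof.
move=> hO lcO y; have [k bk ky] := exists_bump R hO lcO openT (I : setT (rY y)).
apply: (@iota_character _ (fun z => 1 * k (rY z))); last by rewrite mul1r.
exact: inH_mul_bump (Cb_cst _ _) bk.
Qed.

Lemma iota_dense_eq (T : topologicalType) (W : set FN) (p : FN) (f g : FN -> T) :
  hausdorff_space T -> (forall y, bX (iota y)) -> W `<=` bX -> W p ->
  (\forall q \near p, bX q -> W q) ->
  f @ within W (nbhs p) --> f p -> g @ within W (nbhs p) --> g p ->
  (forall y, W (iota y) -> f (iota y) = g (iota y)) -> f p = g p.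
Proof.
move=> hT ibX WbX Wp Wnear cf cg fg; apply: hT => A B /cf fA /cg gB.
have : nbhs p (fun q => [/\ bX q -> W q, W q -> A (f q) & W q -> B (g q)]).
  by apply: filterS3 Wnear fA gB => q.
move=> /nbhs_ptws_basic [l [e [e0 le]]].
have [y ly] := iota_approx (WbX _ Wp) l e0.
have [/(_ (ibX y)) Wy Ay By] := le _ ly.
by exists (f (iota y)); split; [exact: Ay|rewrite fg //; exact: By].
Qed.

End Density.

Definition lift_on (Y O : topologicalType) (rY : Y -> O) (A B : set O) (tau : O -> O)
    (th : Y -> Y) : Prop :=
  [/\ open A, (forall x, A x -> {for x, continuous tau}), (forall x, A x -> B (tau x)),
      (forall y, A (rY y) -> rY (th y) = tau (rY y)) &
      (forall y, A (rY y) -> {for y, continuous th})].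

Section Transport.
Variables (R : realType) (Y O : topologicalType) (rY : Y -> O).
Local Notation H := (inH R rY).
Local Notation iota := (iota_beta R rY).
Local Notation FN := (functionals R Y).
Local Notation bX := (betaX R rY).
Variable betar : FN -> O.
Hypothesis crY : continuous rY.
Hypothesis hO : hausdorff_space O.
Hypothesis lcO : locally_compact [set: O].
Hypothesis cbetar : {within bX, continuous betar}.
Hypothesis betar_iota : forall y, betar (iota y) = rY y.

Lemma betar_cvg phi : bX phi -> betar @ within bX (nbhs phi) --> betar phi.
Proof. by move: phi; apply/subspace_continuousP. Qed.

Lemma betar_cvg_within (D : set FN) phi : D `<=` bX -> bX phi ->
  betar @ within D (nbhs phi) --> betar phi.
Proof.
by move=> DbX bp; apply: cvg_trans _ (betar_cvg bp); apply: cvg_app; exact: within_subset.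
Qed.

Lemma betaX_near (A : set O) phi : open A -> bX phi -> A (betar phi) ->
  \forall q \near phi, bX q -> (bX `&` betar @^-1` A) q.
Proof.
move=> oA bp Ap.
have nA : nbhs phi (fun q => bX q -> A (betar q)).
  by have /(_ A (open_nbhs_nbhs (conj oA Ap))) := betar_cvg bp.
by apply: filterS nA => q Aq bq; split => //; exact: Aq.
Qed.

Lemma character_mul_comp phi G h : bX phi -> H G -> continuous h ->
  H (fun y => G y * h (rY y)) -> phi (fun y => G y * h (rY y)) = phi G * h (betar phi).
Proof.
move=> bp HG ch HGh.
apply: (@iota_dense_eq R Y O rY R bX phi (fun q => q (fun y => G y * h (rY y)))
  (fun q => q G * h (betar q)) (@Rhausdorff R) (iota_betaX R crY hO lcO) _ bp _ _ _ _) => //.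
- exact: filterE.
- exact: continuous_cvg_within (@ptws_eval_continuous R Y _ phi).
- apply: cvgM; first exact: continuous_cvg_within (@ptws_eval_continuous R Y _ phi).
  exact: cvg_comp (betar_cvg bp) (ch _).
- by move=> y _; rewrite betar_iota !iota_betaE.
Qed.

Lemma betaX_eq_on (A : set O) (f g : FN -> FN) : open A ->
  {within bX `&` betar @^-1` A, continuous f} -> {within bX `&` betar @^-1` A, continuous g} ->
  (forall y, A (rY y) -> f (iota y) = g (iota y)) ->
  forall p, (bX `&` betar @^-1` A) p -> f p = g p.
Proof.
move=> oA /subspace_continuousP cf /subspace_continuousP cg fg p Dp; have [bp Ap] := Dp.
apply/funext => F; apply: (@iota_dense_eq R Y O rY R _ p (fun q => f q F) (fun q => g q F)
  (@Rhausdorff R) (iota_betaX R crY hO lcO) _ Dp).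
- by move=> q [].
- exact: betaX_near oA bp Ap.
- exact: (cvg_comp _ _ (cf p Dp) (@ptws_eval_continuous R Y F (f p))).
- exact: (cvg_comp _ _ (cg p Dp) (@ptws_eval_continuous R Y F (g p))).
- by move=> y [_ /=]; rewrite betar_iota => /fg ->.
Qed.

Lemma Cb_cutoff (A : set O) (th : Y -> Y) k F : open A ->
  (forall y, A (rY y) -> {for y, continuous th}) -> bump_in A k -> Cb R F ->
  Cb R (fun y => k (rY y) * F (th y)).
Proof.
move=> oA thc [ck k01 [K [cK KA Kz]]] [cF [M FM]]; split; last first.
  exists M => y; rewrite normrM -[M]mul1r; apply: ler_pM => //.
  by have /andP[k0 k1] := k01 (rY y); rewrite ger0_norm.
have oAY : open (rY @^-1` A) by apply: open_comp => // y _; exact: crY.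
apply: (continuous_zero_off oAY (preimage_closed _ (compact_closed hO cK))) => //.
- by move=> y /KA.
- move=> y Ay; apply: cvgM; apply: continuous_comp.
  + exact: crY.
  + exact: ck.
  + exact: thc.
  + exact: cF.
- by move=> y nK; rewrite Kz // mul0r.
Qed.

Lemma inH_cutoff (A : set O) (th : Y -> Y) k F : open A ->
  (forall y, A (rY y) -> {for y, continuous th}) -> bump_in A k -> Cb R F ->
  H (fun y => k (rY y) * F (th y) * k (rY y)).
Proof. by move=> oA thc bk CF; exact: (inH_mul_bump crY (Cb_cutoff oA thc bk CF) bk). Qed.

Variables (A : set O) (th : Y -> Y).
Hypothesis oA : open A.
Hypothesis thc : forall y, A (rY y) -> {for y, continuous th}.
Local Notation DA := (bX `&` betar @^-1` A).

Definition bump_at (x : O) : O -> R :=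
  match pselect (exists2 k, bump_in A k & k x != 0) with
  | left h => projT1 (cid2 h)
  | right _ => fun _ => 0
  end.

Lemma bump_atP x : A x -> bump_in A (bump_at x) /\ bump_at x x != 0.
Proof.
move=> Ax; rewrite /bump_at; case: pselect => [h|[]]; last exact: exists_bump.
by case: cid2.
Qed.

Definition transport_with (k : O -> R) (phi : FN) (F : Y -> R) : R :=
  phi (fun y => k (rY y) * F (th y) * k (rY y)).

(* junk value: [phi] itself when [betar phi] lies outside [A] *)
Definition transport (phi : FN) : FN :=
  if `[< A (betar phi) >] then
    fun F => if `[< H F >] then
       transport_with (bump_at (betar phi)) phi F / bump_at (betar phi) (betar phi) ^+ 2
     else 0
  else phi.

Lemma transport_with_indep phi k k' F : bX phi -> bump_in A k -> bump_in A k' -> H F ->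
  transport_with k phi F * k' (betar phi) ^+ 2 = transport_with k' phi F * k (betar phi) ^+ 2.
Proof.
move=> bp bk bk' HF; have CF := inH_Cb HF.
have [ck2 _ _] := bump_sqr bk; have [ck2' _ _] := bump_sqr bk'.
rewrite -(character_mul_comp bp (inH_cutoff oA thc bk CF) ck2'); last first.
  exact: (inH_mul_bump crY (inH_Cb (inH_cutoff oA thc bk CF)) (bump_sqr bk')).
rewrite -(character_mul_comp bp (inH_cutoff oA thc bk' CF) ck2); last first.
  exact: (inH_mul_bump crY (inH_Cb (inH_cutoff oA thc bk' CF)) (bump_sqr bk)).
by congr phi; apply/funext => y; ring.
Qed.

Lemma transport_withE phi k F : DA phi -> bump_in A k -> H F ->
  transport_with k phi F = transport phi F * k (betar phi) ^+ 2.
Proof.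
move=> [bp Ap] bk HF; have [bk0 k0p] := bump_atP Ap.
rewrite /transport (asboolT Ap) (asboolT HF) mulrAC -(transport_with_indep bp bk bk0 HF).
by rewrite mulfK // expf_neq0.
Qed.

Lemma transport_iota y : A (rY y) -> transport (iota y) = iota (th y).
Proof.
move=> Ay; apply/funext => F; rewrite /transport betar_iota (asboolT Ay).
case: (pselect (H F)) => [HF|nHF]; last by rewrite asboolF // iota_betaN.
have [bk ky] := bump_atP Ay.
rewrite (asboolT HF) /transport_with !iota_betaE //; last first.
  exact: (inH_cutoff oA thc bk (inH_Cb HF)).
by field.
Qed.

Lemma transport_cvg p : DA p -> transport @ within DA (nbhs p) --> transport p.
Proof.
move=> [bp Ap]; apply: cvg_functionals => F.
change ((fun q => transport q F) @ within DA (nbhs p) --> transport p F).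
have DA_near : \forall q \near within DA (nbhs p), DA q by exact: withinT.
have [HF|nHF] := pselect (H F); last first.
  rewrite {2}/transport (asboolT Ap) asboolF //.
  apply: (@cvg_near_eq _ _ _ _ _ (fun _ => 0)); last exact: cvg_cst.
  by apply: filterS DA_near => q [_ /= Aq]; rewrite /transport (asboolT Aq) asboolF.
have [bk kp] := bump_atP Ap; set k := bump_at (betar p) in bk kp *.
have [ck _ _] := bk.
have kb : (k \o betar) @ within DA (nbhs p) --> k (betar p).
  by apply: (cvg_comp betar k _ (ck (betar p))); apply: betar_cvg_within bp => q [].
pose g q := transport_with k q F / k (betar q) ^+ 2.
have -> : transport p F = g p by rewrite /g transport_withE ?mulfK ?expf_neq0 //.
apply: (@cvg_near_eq _ _ _ _ _ g).
  have : \forall q \near within DA (nbhs p), k (betar q) != 0.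
    by apply: (kb [set r | r != 0]); apply: open_nbhs_nbhs; split => //; exact: open_neq.
  apply: filterS2 DA_near => q Dq kq.
  by rewrite /g (transport_withE Dq bk HF) mulfK // expf_neq0.
apply: cvgM; first exact: continuous_cvg_within (@ptws_eval_continuous R Y _ p).
by apply: cvgV; [rewrite expf_neq0|exact: (cvgM kb kb)].
Qed.

Lemma transport_continuous : {within DA, continuous transport}.
Proof. by apply/subspace_continuousP => p; exact: transport_cvg. Qed.

Lemma transport_character phi : DA phi -> (exists2 G, H G & transport phi G <> 0) ->
  bX (transport phi).
Proof.
move=> Dp nz; have [bp Ap] := Dp; have [bk kp] := bump_atP Ap.
set k := bump_at (betar phi) in bk kp *.
have tE F : H F -> transport phi F = transport_with k phi F / k (betar phi) ^+ 2.
  by move=> HF; rewrite (transport_withE Dp bk HF) mulfK // expf_neq0.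
have Hk F : H F -> H (fun y => k (rY y) * F (th y) * k (rY y)).
  by move=> HF; exact: (inH_cutoff oA thc bk (inH_Cb HF)).
split => [F nHF|F G HF HG|a F HF|F G HF HG|//].
- by rewrite /transport (asboolT Ap) asboolF.
- rewrite (tE _ (inHD HF HG)) (tE _ HF) (tE _ HG) -mulrDl; congr (_ / _).
  by apply: (characterD bp (Hk _ HF) (Hk _ HG)) => y; ring.
- rewrite (tE _ (inHZ a HF)) (tE _ HF) mulrA; congr (_ / _).
  by apply: (characterZ bp (Hk _ HF)) => y; ring.
- have HFG := inHM HF HG; have [ck2 _ _] := bump_sqr bk.
  have E : transport_with k phi F * transport_with k phi G =
      transport_with k phi (fun y => F y * G y) * k (betar phi) ^+ 2.
    rewrite /transport_with -(character_mul_comp bp (Hk _ HFG) ck2); last first.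
      exact: (inH_mul_bump crY (inH_Cb (Hk _ HFG)) (bump_sqr bk)).
    by symmetry; apply: (characterM bp (Hk _ HF) (Hk _ HG)) => y; ring.
  by rewrite (tE _ HFG) (tE _ HF) (tE _ HG) mulf_div E; field.
Qed.

Variables (B : set O) (tau : O -> O) (th' : Y -> Y).
Hypothesis oB : open B.
Hypothesis tauc : forall x, A x -> {for x, continuous tau}.
Hypothesis tauAB : forall x, A x -> B (tau x).
Hypothesis thr : forall y, A (rY y) -> rY (th y) = tau (rY y).
Hypothesis thc' : forall y, B (rY y) -> {for y, continuous th'}.
Hypothesis th'K : forall y, A (rY y) -> th' (th y) = y.

(* a test function on which [transport phi] does not vanish, obtained by
   pulling back along [th'] one on which [phi] does not vanish *)
Lemma transport_nonzero phi : DA phi -> exists2 G, H G & transport phi G <> 0.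
Proof.
move=> Dp; have [bp Ap] := Dp; have [_ _ _ _ [F HF pF]] := bp.
have [bk kp] := bump_atP Ap; set k := bump_at _ in bk kp *.
have [k' bk' k'p] := exists_bump R hO lcO oB (tauAB Ap).
pose G y := k' (rY y) * F (th' y) * k' (rY y).
have HG : H G := inH_cutoff oB thc' bk' (inH_Cb HF).
exists G => // TG0.
have [ck'2 k'2_01 _] := bump_sqr bk'.
pose m z := if `[< A z >] then k z ^+ 2 * k' (tau z) ^+ 2 else 0.
have bm : bump_in A m := bump_mul_comp hO oA (bump_sqr bk) tauc ck'2 k'2_01.
have := transport_withE Dp bk HG; rewrite TG0 mul0r /transport_with.
rewrite (_ : (fun y => _) = fun y => F y * m (rY y)); last first.
  apply/funext => y; have [Ay|nAy] := pselect (A (rY y)).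
    by rewrite /G /m (asboolT Ay) thr // th'K //; ring.
  by rewrite /m asboolF // (bump_eq0 bk nAy) !mul0r mulr0.
have [cm _ _] := bm.
rewrite (character_mul_comp bp HF cm (inH_mul_bump crY (inH_Cb HF) bm)) => /eqP.
rewrite mulf_eq0 /m (asboolT Ap) !mulf_eq0 (negbTE kp) (negbTE k'p) /= orbF.
by move/eqP.
Qed.

Lemma transport_betaX phi : DA phi -> bX (transport phi).
Proof. by move=> Dp; apply: transport_character Dp (transport_nonzero Dp). Qed.

Lemma transport_betar phi : DA phi -> betar (transport phi) = tau (betar phi).
Proof.
move=> Dp; have [bp Ap] := Dp.
apply: (@iota_dense_eq R Y O rY O DA phi (betar \o transport) (tau \o betar) hO
  (iota_betaX R crY hO lcO) _ Dp).
- by move=> q [].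
- exact: betaX_near oA bp Ap.
- have := continuous_within_comp transport_continuous transport_betaX cbetar.
  by move/subspace_continuousP; apply.
- by apply: (cvg_comp betar tau _ (tauc Ap)); apply: betar_cvg_within bp => q [].
- by move=> y [_ /=]; rewrite betar_iota => Ay; rewrite transport_iota // betar_iota thr.
Qed.

Lemma transport_maps phi : DA phi -> (bX `&` betar @^-1` B) (transport phi).
Proof.
move=> Dp; split; first exact: transport_betaX.
by rewrite /= transport_betar //; case: Dp => _ /tauAB.
Qed.

End Transport.

Section TransportInverse.
Variables (R : realType) (Y O : topologicalType) (rY : Y -> O).
Local Notation iota := (iota_beta R rY).
Local Notation FN := (functionals R Y).
Local Notation bX := (betaX R rY).
Variable betar : FN -> O.
Hypothesis crY : continuous rY.
Hypothesis hO : hausdorff_space O.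
Hypothesis lcO : locally_compact [set: O].
Hypothesis cbetar : {within bX, continuous betar}.
Hypothesis betar_iota : forall y, betar (iota y) = rY y.

Lemma transport_lift_maps (A B : set O) (tau tau' : O -> O) (th th' : Y -> Y) :
  lift_on rY A B tau th -> lift_on rY B A tau' th' ->
  (forall y, A (rY y) -> th' (th y) = y) ->
  forall phi, (bX `&` betar @^-1` A) phi ->
  (bX `&` betar @^-1` B) (transport rY betar A th phi).
Proof.
move=> [oA tauc tauAB thr thc] [oB _ _ _ thc'].
exact: (transport_maps crY hO lcO cbetar betar_iota oA thc oB tauc tauAB thr thc').
Qed.

Lemma transportK (A B : set O) (tau tau' : O -> O) (th th' : Y -> Y) :
  lift_on rY A B tau th -> lift_on rY B A tau' th' ->
  (forall y, A (rY y) -> th' (th y) = y) ->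
  forall phi, (bX `&` betar @^-1` A) phi ->
  transport rY betar B th' (transport rY betar A th phi) = phi.
Proof.
move=> liftA liftB th'K; have maps := transport_lift_maps liftA liftB th'K.
have [oA _ tauAB thr thc] := liftA; have [oB _ _ _ thc'] := liftB.
apply: (betaX_eq_on crY hO lcO cbetar betar_iota (g := id) oA).
- apply: continuous_within_comp maps _; exact: transport_continuous.
- by apply/subspace_continuousP => p _; exact: cvg_within_filter.
- move=> y Ay; have By : B (rY (th y)) by rewrite thr //; exact: tauAB.
  by rewrite /= !(transport_iota crY hO lcO betar_iota) // th'K.
Qed.

Lemma transport_partial_homeo (A B : set O) (tau tau' : O -> O) (th th' : Y -> Y) :
  lift_on rY A B tau th -> lift_on rY B A tau' th' ->
  (forall y, A (rY y) -> th' (th y) = y) -> (forall y, B (rY y) -> th (th' y) = y) ->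
  partial_homeo (bX `&` betar @^-1` A) (bX `&` betar @^-1` B) (transport rY betar A th).
Proof.
move=> liftA liftB th'K thK'.
have KA := transportK liftA liftB th'K; have KB := transportK liftB liftA thK'.
have mapsA := transport_lift_maps liftA liftB th'K.
have mapsB := transport_lift_maps liftB liftA thK'.
have [oA _ _ _ thc] := liftA; have [oB _ _ _ thc'] := liftB.
split.
- apply/seteqP; split => [_ [q Dq <-]|q Dq]; first exact: mapsA.
  by exists (transport rY betar B th' q); [exact: mapsB|exact: KB].
- by move=> a b Da Db E; rewrite -(KA _ Da) E KA.
- exact: transport_continuous.
- exists (transport rY betar B th'); split; [|exact: KA|exact: KB|exact: transport_continuous].
  apply/seteqP; split => [_ [q Dq <-]|q Dq]; first exact: mapsB.
  by exists (transport rY betar A th q); [exact: mapsA|exact: KA].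
Qed.

End TransportInverse.

Lemma local_homeomorphism_open (G O : topologicalType) (f : G -> O) :
  local_homeomorphism f -> forall W, open W -> open (f @` W).
Proof.
move=> [cf lf] W oW; rewrite openE => _ [g Wg <-].
have [V [oV Vg _ oimg]] := lf g.
have oWV : open (f @` (W `&` V)) by apply: oimg; [exact: openI|move=> ? []].
have : nbhs (f g) (f @` (W `&` V)) by apply: open_nbhs_nbhs; split => //; exists g.
by apply: filterS => _ [h [Wh _] <-]; exists h.
Qed.

Section SliceSection.
Variables (G O : topologicalType) (U : set G) (f : G -> O) (d : O -> G).

(* [d] is a junk default, used only off [f @` U] *)
Definition slice_section (x : O) : G :=
  match pselect ((f @` U) x) with
  | left h => projT1 (cid2 h)
  | right _ => d x
  end.

Lemma slice_sectionP x : (f @` U) x -> U (slice_section x) /\ f (slice_section x) = x.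
Proof. by rewrite /slice_section; case: pselect => // h _; case: cid2. Qed.

Hypothesis finj : forall a b, U a -> U b -> f a = f b -> a = b.

Lemma slice_sectionK g : U g -> slice_section (f g) = g.
Proof.
move=> Ug; have [Ug' fg'] : U (slice_section (f g)) /\ f (slice_section (f g)) = f g.
  by apply: slice_sectionP; exists g.
exact: finj Ug' Ug fg'.
Qed.

Lemma slice_section_continuous x : open U -> local_homeomorphism f -> (f @` U) x ->
  {for x, continuous slice_section}.
Proof.
move=> oU lhf [g Ug <-]; rewrite /prop_for /continuous_at slice_sectionK // => N Ng.
have : nbhs g (N `&` U) by apply: filterI => //; exact: open_nbhs_nbhs.
rewrite nbhsE => -[W [oW Wg] WNU].
have : nbhs (f g) (f @` W).
  by apply: open_nbhs_nbhs; split; [exact: local_homeomorphism_open|exists g].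
by apply: filterS => _ [w Ww <-]; have [Nw Uw] := WNU w Ww; rewrite /= slice_sectionK.
Qed.

End SliceSection.

Section SliceAction.
Variables (G O Y : topologicalType) (s r : G -> O) (u : O -> G) (mul : G -> G -> G)
  (inv : G -> G) (rY : Y -> O) (act : G -> Y -> Y) (U : set G).
Hypothesis Gpd : is_lc_etale_groupoid s r u mul inv.
Hypothesis Act : is_groupoid_action s r u mul rY act.
Hypothesis Slice : is_slice s r U.

Definition slice_act (y : Y) : Y := act (slice_section U s u (rY y)) y.
Definition slice_act_inv (y : Y) : Y := act (inv (slice_section U r u (rY y))) y.
Definition slice_tau (x : O) : O := r (slice_section U s u x).
Definition slice_tau_inv (x : O) : O := s (slice_section U r u x).

Lemma slice_actE g y : U g -> s g = rY y -> slice_act y = act g y.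
Proof. by have [_ sinj _] := Slice; move=> Ug sg; rewrite /slice_act -sg slice_sectionK. Qed.

Lemma slice_act_lift : lift_on rY (s @` U) (r @` U) slice_tau slice_act.
Proof.
have [_ [_ _] _ [lhs lhr] _] := Gpd; have [crY rY_act _ _ cact] := Act.
have [oU sinj _] := Slice.
have nearA y : (s @` U) (rY y) -> \forall z \near y, (s @` U) (rY z).
  move=> Ay; apply: open_nbhs_nbhs; split => //.
  by apply: open_comp => [z _|]; [exact: crY|exact: local_homeomorphism_open].
split.
- exact: local_homeomorphism_open.
- move=> x Ax; apply: (@continuous_comp _ _ _ (slice_section U s u) r).
    exact: (slice_section_continuous (d := u) sinj oU lhs Ax).
  exact: (proj1 lhr).
- by move=> x /(slice_sectionP u)[Ug _]; exists (slice_section U s u x).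
- by move=> y /(slice_sectionP u)[_ sg]; rewrite rY_act.
- move=> y Ay.
  have -> : slice_act = (fun p => act p.1 p.2) \o (fun z => (slice_section U s u (rY z), z)).
    by [].
  apply: (continuous_comp_within (S := [set p : G * Y | s p.1 = rY p.2])) => //.
  + apply: cvg_pair; last exact: cvg_id.
    apply: (@continuous_comp _ _ _ rY (slice_section U s u)); first exact: crY.
    exact: (slice_section_continuous (d := u) sinj oU lhs Ay).
  + by apply: filterS (nearA y Ay) => z /(slice_sectionP u)[].
  + by have [] := slice_sectionP u Ay.
Qed.

Lemma slice_act_inv_lift : lift_on rY (r @` U) (s @` U) slice_tau_inv slice_act_inv.
Proof.
have [[_ _ _ _ Hinv] [_ cinv] _ [lhs lhr] _] := Gpd; have [crY rY_act _ _ cact] := Act.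
have [oU _ rinj] := Slice.
have s_inv g : s (inv g) = r g by have [] := Hinv g.
have nearB y : (r @` U) (rY y) -> \forall z \near y, (r @` U) (rY z).
  move=> By; apply: open_nbhs_nbhs; split => //.
  by apply: open_comp => [z _|]; [exact: crY|exact: local_homeomorphism_open].
split.
- exact: local_homeomorphism_open.
- move=> x Bx; apply: (@continuous_comp _ _ _ (slice_section U r u) s).
    exact: (slice_section_continuous (d := u) rinj oU lhr Bx).
  exact: (proj1 lhs).
- by move=> x /(slice_sectionP u)[Ug _]; exists (slice_section U r u x).
- move=> y /(slice_sectionP u)[_ rg]; rewrite rY_act ?s_inv //.
  by have [_ ->] := Hinv (slice_section U r u (rY y)).
- move=> y By.
  have -> : slice_act_inv =
      (fun p => act p.1 p.2) \o (fun z => (inv (slice_section U r u (rY z)), z)) by [].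
  apply: (continuous_comp_within (S := [set p : G * Y | s p.1 = rY p.2])) => //.
  + apply: cvg_pair; last exact: cvg_id.
    apply: (@continuous_comp _ _ _ (fun z => slice_section U r u (rY z)) inv y _ (cinv _)).
    apply: (@continuous_comp _ _ _ rY (slice_section U r u)); first exact: crY.
    exact: (slice_section_continuous (d := u) rinj oU lhr By).
  + by apply: filterS (nearB y By) => z /(slice_sectionP u)[_ rg] /=; rewrite s_inv.
  + by have [_ rg] := slice_sectionP u By; rewrite /= s_inv.
Qed.

Lemma slice_act_invK y : (s @` U) (rY y) -> slice_act_inv (slice_act y) = y.
Proof.
have [[_ _ _ _ Hinv] _ _ _ _] := Gpd; have [_ rY_act act1 actM _] := Act.
have [_ _ rinj] := Slice.
move=> /(slice_sectionP u)[Ug sg]; set g := slice_section U s u (rY y) in Ug sg *.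
have [s_inv _ inv_mul _] := Hinv g.
rewrite /slice_act_inv /slice_act -/g rY_act // slice_sectionK //.
by rewrite -actM // inv_mul sg act1.
Qed.

Lemma slice_actK y : (r @` U) (rY y) -> slice_act (slice_act_inv y) = y.
Proof.
have [[_ _ _ _ Hinv] _ _ _ _] := Gpd; have [_ rY_act act1 actM _] := Act.
have [_ sinj _] := Slice.
move=> /(slice_sectionP u)[Ug rg]; set g := slice_section U r u (rY y) in Ug rg *.
have [s_inv r_inv _ mul_inv] := Hinv g.
rewrite /slice_act /slice_act_inv -/g rY_act ?s_inv // r_inv slice_sectionK //.
by rewrite -actM ?r_inv ?s_inv // mul_inv rg act1.
Qed.

End SliceAction.

Theorem proposition5p1 (R : realType) (G O Y : topologicalType)
    (s r : G -> O) (u : O -> G) (mul : G -> G -> G) (inv : G -> G)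
    (rY : Y -> O) (act : G -> Y -> Y) (U : set G)
    (betar : functionals R Y -> O) :
  is_lc_etale_groupoid s r u mul inv ->
  is_groupoid_action s r u mul rY act ->
  is_slice s r U ->
  (* betar is the (unique) continuous map beta r_Y : beta Y -> O
     with betar \o iota_beta = r_Y *)
  {within betaX R rY, continuous betar} ->
  (forall y, betar (iota_beta R rY y) = rY y) ->
  let D := betaX R rY `&` betar @^-1` (s @` U) in
  let E := betaX R rY `&` betar @^-1` (r @` U) in
  exists theta : functionals R Y -> functionals R Y,
    [/\ partial_homeo D E theta,
        (forall g y, U g -> s g = rY y ->
           theta (iota_beta R rY y) = iota_beta R rY (act g y)) &
        (forall theta' : functionals R Y -> functionals R Y,
           partial_homeo D E theta' ->
           (forall g y, U g -> s g = rY y ->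
              theta' (iota_beta R rY y) = iota_beta R rY (act g y)) ->
           forall p, D p -> theta' p = theta p)].
Proof.
move=> Gpd Act Slice cbetar betar_iota D E.
have [_ _ _ _ [hO lcO _]] := Gpd; have [crY _ _ _ _] := Act.
have lift := slice_act_lift Gpd Act Slice; have [oA _ _ _ thc] := lift.
have extends g y : U g -> s g = rY y ->
    transport rY betar (s @` U) (slice_act s u rY act U) (iota_beta R rY y) =
    iota_beta R rY (act g y).
  move=> Ug sg; rewrite (transport_iota crY hO lcO betar_iota oA thc); last by exists g.
  by rewrite (slice_actE u act Slice Ug sg).
exists (transport rY betar (s @` U) (slice_act s u rY act U)); split => //.
- exact: (transport_partial_homeo crY hO lcO cbetar betar_iota lift
    (slice_act_inv_lift Gpd Act Slice) (slice_act_invK Gpd Act Slice)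
    (slice_actK Gpd Act Slice)).
- move=> theta' [_ _ ctheta' _] extends' p Dp.
  apply: (betaX_eq_on crY hO lcO cbetar betar_iota oA ctheta'
    (transport_continuous crY hO lcO cbetar betar_iota oA thc)) => // y [g Ug sg].
  by rewrite (extends' g y Ug sg) (extends g y Ug sg).
Qed.
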